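(* Let $\mathcal{N}$ be one of $\mathcal{M}_\times$, $\mathcal{M}_\Sigma$, $\mathcal{M}$. If $\mathcal{N}\perp\Sigma$ and $\mathcal{N}\perp\mathsf{L}E$, then $\mathcal{N}\perp E$.
   Context: $\mathcal{E}$ is a locally cartesian closed category with a dominance: a class of monos (the $\Sigma$-monos) closed under pullback, identities and composition, classified by $\top:1\to\Sigma$. $\mathsf{L}E=\sum_{\phi:\Sigma}E^\phi$ is the associated partial map classifier. For a mono $m:I\to J$, $m\perp E$ means every map $I\to E$ extends uniquely along $m$; $\mathcal{N}\perp E$ means $m\perp E$ for all $m\in\mathcal{N}$. Given a class $\mathcal{M}$ of monos, $\mathcal{M}_\times$ is the smallest class of monos containing $\mathcal{M}$ and stable under products (with arbitrary objects), and $\mathcal{M}_\Sigma$ is the smallest class of monos containing $\mathcal{M}_\times$ and stable under pullback along $\Sigma$-monos. *)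

Set Implicit Arguments.
Unset Strict Implicit.

Record Cat := {
  Ob :> Type;
  Hom : Ob -> Ob -> Type;
  idm : forall A, Hom A A;
  comp : forall A B D, Hom B D -> Hom A B -> Hom A D;
  comp_id_l : forall A B (f : Hom A B), comp (idm B) f = f;
  comp_id_r : forall A B (f : Hom A B), comp f (idm A) = f;
  comp_assoc : forall A B D E (f : Hom A B) (g : Hom B D) (h : Hom D E),
      comp h (comp g f) = comp (comp h g) f
}.
Arguments Hom {c} _ _.
Arguments idm {c} _.
Arguments comp {c A B D} _ _.

Declare Scope cat_scope.
Notation "g ∘ f" := (comp g f) (at level 40, left associativity) : cat_scope.
Open Scope cat_scope.

Definition Mono {C : Cat} {A B : C} (m : Hom A B) : Prop :=
  forall X (f g : Hom X A), m ∘ f = m ∘ g -> f = g.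

Definition IsPullback {C : Cat} {A B D P : C} (f : Hom A D) (g : Hom B D)
    (p1 : Hom P A) (p2 : Hom P B) : Prop :=
  f ∘ p1 = g ∘ p2 /\
  forall X (x1 : Hom X A) (x2 : Hom X B), f ∘ x1 = g ∘ x2 ->
    exists h : Hom X P, p1 ∘ h = x1 /\ p2 ∘ h = x2 /\
      forall h' : Hom X P, p1 ∘ h' = x1 -> p2 ∘ h' = x2 -> h' = h.

(* Locally cartesian closed structure: terminal object, chosen pullbacks, and
   dependent products Pi_f (right adjoints to pullback f^* ) along every f. *)
Record LCCC (C : Cat) := {
  one : C;
  bang : forall X : C, Hom X one;
  bang_unique : forall X (f : Hom X one), f = bang X;
  pbOb : forall (A B D : C) (f : Hom A D) (g : Hom B D), C;
  pb1 : forall A B D (f : Hom A D) (g : Hom B D), Hom (pbOb f g) A;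
  pb2 : forall A B D (f : Hom A D) (g : Hom B D), Hom (pbOb f g) B;
  pb_isPB : forall A B D (f : Hom A D) (g : Hom B D),
      IsPullback f g (pb1 f g) (pb2 f g);
  PiOb : forall (A B : C) (f : Hom A B) (X : C) (p : Hom X A), C;
  Pi_pr : forall A B (f : Hom A B) X (p : Hom X A), Hom (PiOb f p) B;
  Pi_ev : forall A B (f : Hom A B) X (p : Hom X A),
      Hom (pbOb (Pi_pr f p) f) X;
  Pi_ev_over : forall A B (f : Hom A B) X (p : Hom X A),
      p ∘ Pi_ev f p = pb2 (Pi_pr f p) f;
  Pi_univ : forall A B (f : Hom A B) X (p : Hom X A)
      (Y : C) (q : Hom Y B) (h : Hom (pbOb q f) X),
      p ∘ h = pb2 q f ->
      exists h' : Hom Y (PiOb f p),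
        Pi_pr f p ∘ h' = q /\
        (forall k : Hom (pbOb q f) (pbOb (Pi_pr f p) f),
            pb1 (Pi_pr f p) f ∘ k = h' ∘ pb1 q f ->
            pb2 (Pi_pr f p) f ∘ k = pb2 q f ->
            Pi_ev f p ∘ k = h) /\
        (forall h'' : Hom Y (PiOb f p),
            Pi_pr f p ∘ h'' = q ->
            (forall k : Hom (pbOb q f) (pbOb (Pi_pr f p) f),
                pb1 (Pi_pr f p) f ∘ k = h'' ∘ pb1 q f ->
                pb2 (Pi_pr f p) f ∘ k = pb2 q f ->
                Pi_ev f p ∘ k = h) ->
            h'' = h')
}.
Arguments one {C} _.
Arguments bang {C} _ _.

Definition MorClass (C : Cat) := forall A B : C, Hom A B -> Prop.

Record Dominance (C : Cat) (L : LCCC C) := {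
  Sig : C;
  top : Hom (one L) Sig;
  SigMono : MorClass C;
  SigMono_mono : forall A B (m : Hom A B), SigMono m -> Mono m;
  SigMono_pb : forall A B D P (m : Hom A D) (g : Hom B D)
      (p1 : Hom P A) (p2 : Hom P B),
      SigMono m -> IsPullback m g p1 p2 -> SigMono p2;
  SigMono_id : forall A : C, SigMono (idm A);
  SigMono_comp : forall A B D (m : Hom A B) (n : Hom B D),
      SigMono m -> SigMono n -> SigMono (n ∘ m);
  SigMono_classified : forall I J (m : Hom I J),
      SigMono m <-> exists chi : Hom J Sig, IsPullback top chi (bang L I) m;
  SigMono_chi_unique : forall I J (m : Hom I J) (chi chi' : Hom J Sig),
      IsPullback top chi (bang L I) m -> IsPullback top chi' (bang L I) m ->
      chi = chi'
}.
Arguments Sig {C L} _.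
Arguments top {C L} _.
Arguments SigMono {C L} _ _ _ _.

(* Partial map classifier L E = sum_{phi : Sigma} E^phi = Sigma_! Pi_top (E) *)
Definition LObj {C : Cat} {L : LCCC C} (Dm : Dominance L) (E : C) : C :=
  PiOb L (top Dm) (bang L E).

Definition Orth {C : Cat} {I J : C} (m : Hom I J) (E : C) : Prop :=
  forall f : Hom I E, exists g : Hom J E, g ∘ m = f /\
    forall g' : Hom J E, g' ∘ m = f -> g' = g.

Definition ClassOrth {C : Cat} (N : MorClass C) (E : C) : Prop :=
  forall I J (m : Hom I J), N I J m -> Orth m E.

(* M_times : smallest class containing M, stable under products m × X
   (products are pullbacks over the terminal object). *)
Inductive Mtimes {C : Cat} (L : LCCC C) (M : MorClass C) : MorClass C :=
| mt_base : forall I J (m : Hom I J), M I J m -> @Mtimes C L M I J m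
| mt_prod : forall I J (m : Hom I J), @Mtimes C L M I J m ->
    forall (X P Q : C) (a1 : Hom P I) (a2 : Hom P X)
      (b1 : Hom Q J) (b2 : Hom Q X) (k : Hom P Q),
      IsPullback (bang L I) (bang L X) a1 a2 ->
      IsPullback (bang L J) (bang L X) b1 b2 ->
      b1 ∘ k = m ∘ a1 -> b2 ∘ k = a2 ->
      @Mtimes C L M P Q k.

Inductive MSigma {C : Cat} {L : LCCC C} (Dm : Dominance L) (M : MorClass C)
  : MorClass C :=
| ms_base : forall I J (m : Hom I J), @Mtimes C L M I J m -> @MSigma C L Dm M I J m
| ms_pb : forall I J (m : Hom I J), @MSigma C L Dm M I J m ->
    forall (K P : C) (s : Hom K J) (p1 : Hom P I) (p2 : Hom P K),
      SigMono Dm K J s -> IsPullback m s p1 p2 ->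
      @MSigma C L Dm M P K p2.

Inductive WhichClass := W_M | W_times | W_Sigma.

Definition chosenClass {C : Cat} {L : LCCC C} (Dm : Dominance L)
    (M : MorClass C) (w : WhichClass) : MorClass C :=
  match w with
  | W_M => M
  | W_times => Mtimes L M
  | W_Sigma => MSigma Dm M
  end.


(* The unit [eta : E -> L E] exhibits E as the pullback of [top : 1 -> Sigma]
   along the projection [L E -> Sigma] (a total partial map is one whose
   domain is [top]).  Orthogonality to a fixed map is stable under pullbacks
   and holds trivially for the terminal object, so [m ⊥ Sigma] and
   [m ⊥ L E] give [m ⊥ E] for each map [m] separately, whatever class it
   belongs to. *)

Section Orthogonality.
Context {C : Cat} (L : LCCC C).

Lemma hom_one_eq (X : C) (a b : Hom X (one L)) : a = b.
Proof. rewrite (bang_unique a), (bang_unique b). reflexivity. Qed.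

Lemma pullback_lift {A B D P X : C} {f : Hom A D} {g : Hom B D}
    {p1 : Hom P A} {p2 : Hom P B} {x1 : Hom X A} {x2 : Hom X B} :
  IsPullback f g p1 p2 -> f ∘ x1 = g ∘ x2 ->
  exists h : Hom X P, p1 ∘ h = x1 /\ p2 ∘ h = x2.
Proof.
  intros [_ Huniv] Hx.
  destruct (Huniv _ _ _ Hx) as [h [H1 [H2 _]]].
  exists h. split; assumption.
Qed.

Lemma pullback_ext {A B D P X : C} {f : Hom A D} {g : Hom B D}
    {p1 : Hom P A} {p2 : Hom P B} {h h' : Hom X P} :
  IsPullback f g p1 p2 -> p1 ∘ h = p1 ∘ h' -> p2 ∘ h = p2 ∘ h' -> h = h'.
Proof.
  intros [Hsq Huniv] H1 H2.
  assert (Hx : f ∘ (p1 ∘ h') = g ∘ (p2 ∘ h')).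
  { rewrite !comp_assoc, Hsq. reflexivity. }
  destruct (Huniv _ _ _ Hx) as [u [_ [_ Hu]]].
  rewrite (Hu h H1 H2), (Hu h' eq_refl eq_refl). reflexivity.
Qed.

Lemma orth_one {I J : C} (m : Hom I J) : Orth m (one L).
Proof.
  intros f. exists (bang L J). split.
  - apply hom_one_eq.
  - intros g' _. apply hom_one_eq.
Qed.

Lemma orth_pullback {I J A B D P : C} {m : Hom I J} {f : Hom A D}
    {g : Hom B D} {p1 : Hom P A} {p2 : Hom P B} :
  IsPullback f g p1 p2 -> Orth m A -> Orth m B -> Orth m D -> Orth m P.
Proof.
  intros Hpb HA HB HD x.
  destruct (HA (p1 ∘ x)) as [a [Ha Hau]].
  destruct (HB (p2 ∘ x)) as [b [Hb Hbu]].
  destruct (HD (f ∘ p1 ∘ x)) as [d [_ Hdu]].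
  assert (Hab : f ∘ a = g ∘ b).
  { rewrite (Hdu (f ∘ a)), (Hdu (g ∘ b)); [reflexivity | |].
    - rewrite <- comp_assoc, Hb, comp_assoc, (proj1 Hpb). reflexivity.
    - rewrite <- comp_assoc, Ha, comp_assoc. reflexivity. }
  destruct (pullback_lift Hpb Hab) as [h [Hh1 Hh2]].
  exists h. split.
  - apply (pullback_ext Hpb); rewrite comp_assoc.
    + rewrite Hh1. exact Ha.
    + rewrite Hh2. exact Hb.
  - intros h' Hh'.
    apply (pullback_ext Hpb).
    + rewrite Hh1. apply Hau. rewrite <- comp_assoc, Hh'. reflexivity.
    + rewrite Hh2. apply Hbu. rewrite <- comp_assoc, Hh'. reflexivity.
Qed.

End Orthogonality.

Section PartialMapClassifier.
Context {C : Cat} {L : LCCC C} (Dm : Dominance L) (E : C).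

Let T := top Dm.
Let LE := LObj Dm E.
Let pr : Hom LE (Sig Dm) := Pi_pr L T (bang L E).
Let ev := Pi_ev L T (bang L E).
Let pbT := pb_isPB L pr T.

(* [eta] is the transpose of the identity of E, seen as a partial map with
   domain [top]. *)
Lemma LObj_unit_exists : exists eta : Hom E LE, pr ∘ eta = T ∘ bang L E /\
  forall (Y : C) (x : Hom Y E) (k : Hom Y (pbOb L pr T)),
    pb1 L pr T ∘ k = eta ∘ x -> ev ∘ k = x.
Proof.
  set (q := T ∘ bang L E).
  assert (Hq := pb_isPB L q T).
  assert (Hh : bang L E ∘ pb1 L q T = pb2 L q T) by apply hom_one_eq.
  destruct (Pi_univ Hh) as [eta [Hpr [Hev _]]].
  exists eta. split; [exact Hpr |].
  intros Y x k Hk.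
  assert (Hc : pr ∘ (eta ∘ pb1 L q T) = T ∘ pb2 L q T).
  { rewrite comp_assoc. fold pr in Hpr. rewrite Hpr. exact (proj1 Hq). }
  destruct (pullback_lift pbT Hc) as [k0 [Hk01 Hk02]].
  assert (Hx : q ∘ x = T ∘ bang L Y).
  { unfold q. rewrite <- comp_assoc. f_equal. apply hom_one_eq. }
  destruct (pullback_lift Hq Hx) as [j [Hj1 _]].
  assert (Hkj : k = k0 ∘ j).
  { apply (pullback_ext pbT); [| apply hom_one_eq].
    rewrite Hk, comp_assoc, Hk01, <- comp_assoc, Hj1. reflexivity. }
  rewrite Hkj, comp_assoc, <- Hj1. f_equal. exact (Hev k0 Hk01 Hk02).
Qed.

Section Unit.
Variable eta : Hom E LE.
Hypothesis eta_over : pr ∘ eta = T ∘ bang L E.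
Hypothesis ev_unit : forall (Y : C) (x : Hom Y E) (k : Hom Y (pbOb L pr T)),
  pb1 L pr T ∘ k = eta ∘ x -> ev ∘ k = x.

(* A map into [L E] over [top] is determined by its transpose, hence equals
   [eta] applied to that transpose. *)
Lemma LObj_unit_transpose (X : C) (k : Hom X (pbOb L pr T)) :
  eta ∘ (ev ∘ k) = pb1 L pr T ∘ k.
Proof.
  set (x := pb1 L pr T ∘ k).
  set (q := pr ∘ x).
  assert (Hq := pb_isPB L q T).
  assert (Hc : pr ∘ (x ∘ pb1 L q T) = T ∘ pb2 L q T).
  { rewrite comp_assoc. exact (proj1 Hq). }
  destruct (pullback_lift pbT Hc) as [k0 [Hk01 Hk02]].
  assert (Hh : bang L E ∘ (ev ∘ k0) = pb2 L q T) by apply hom_one_eq.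
  destruct (Pi_univ Hh) as [h' [_ [_ Huniq]]].
  assert (Hk0 : k0 = k ∘ pb1 L q T).
  { apply (pullback_ext pbT); [| apply hom_one_eq].
    rewrite Hk01, comp_assoc. reflexivity. }
  rewrite (Huniq x eq_refl), (Huniq (eta ∘ (ev ∘ k))); [reflexivity | | |].
  - change (pr ∘ (eta ∘ (ev ∘ k)) = pr ∘ (pb1 L pr T ∘ k)).
    rewrite !comp_assoc, eta_over, (proj1 pbT), <- !comp_assoc.
    f_equal. apply hom_one_eq.
  - intros kk Hkk _. rewrite Hk0, comp_assoc.
    apply ev_unit. rewrite <- comp_assoc in Hkk. exact Hkk.
  - intros kk Hkk1 Hkk2. f_equal.
    apply (pullback_ext pbT).
    + exact (eq_trans Hkk1 (eq_sym Hk01)).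
    + exact (eq_trans Hkk2 (eq_sym Hk02)).
Qed.

Lemma LObj_unit_isPullback : IsPullback T pr (bang L E) eta.
Proof.
  split; [symmetry; exact eta_over |].
  intros X x1 x2 Hx.
  destruct (pullback_lift pbT (eq_sym Hx)) as [k [Hk1 _]].
  exists (ev ∘ k). split; [apply hom_one_eq |]. split.
  - rewrite LObj_unit_transpose. exact Hk1.
  - intros h'' _ Hh''. symmetry. apply ev_unit. rewrite Hk1. symmetry. exact Hh''.
Qed.

End Unit.

Lemma orth_LObj {I J : C} {m : Hom I J} :
  Orth m (Sig Dm) -> Orth m (LObj Dm E) -> Orth m E.
Proof.
  intros HS HL.
  destruct LObj_unit_exists as [eta [Hover Hev]].
  exact (orth_pullback (LObj_unit_isPullback eta Hover Hev) (orth_one L m) HL HS).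
Qed.

End PartialMapClassifier.

Theorem mainTheorem12 (C : Cat) (L : LCCC C) (Dm : Dominance L)
    (M : MorClass C) (HM : forall I J (m : Hom I J), M I J m -> Mono m)
    (w : WhichClass) (E : C) :
  ClassOrth (chosenClass Dm M w) (Sig Dm) ->
  ClassOrth (chosenClass Dm M w) (LObj Dm E) ->
  ClassOrth (chosenClass Dm M w) E.
Proof.
  intros HS HL I J m Hm.
  exact (orth_LObj Dm E (HS I J m Hm) (HL I J m Hm)).
Qed.
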